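(* Let $M$ be a three-dimensional warped product space and let $\vec r:\mathbb{S}^2\to M$ be an embedding as a strictly convex closed surface with unit normal $\nu$. Let $\varphi=X\cdot\nu$ be its support function, where $X=rf(r)\frac{\partial}{\partial r}$, and let $m_0=\{p\in\mathbb{S}^2:\vec r(p)=0\}$. Then $d\varphi\neq 0$ at every point of $$Z=\{p\in\mathbb{S}^2\setminus m_0:\varphi(p)=0\},$$ so $Z$ is a regular curve on the sphere.
   Context: A three-dimensional warped product space is (a region of) $\mathbb{R}^3$ with polar coordinates $(r,\theta)$ and metric $ds^2=\frac{1}{f(r)^2}dr^2+r^2dS_2^2$ ($dS_2^2$ round metric, $f$ smooth and positive), with inner product $\cdot$. $X=rf(r)\partial_r$ is the conformal Killing vector field of this space. Strictly convex means positive definite second fundamental form. *)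

From HB Require Import structures.
From mathcomp Require Import all_boot all_order all_algebra.
From mathcomp Require Import all_classical all_reals all_analysis.
Set Implicit Arguments. Unset Strict Implicit. Unset Printing Implicit Defensive.
Import Order.TTheory GRing.Theory Num.Theory.
Import numFieldNormedType.Exports.
Local Open Scope classical_set_scope.
Local Open Scope ring_scope.

Section Defs.
Variable R : realType.
Notation vec := 'rV[R]_3.

Definition edot (u w : vec) : R := \sum_(i < 3) u ord0 i * w ord0 i.
Definition eradius (x : vec) : R := Num.sqrt (edot x x).

Definition S2 : set vec := [set p | edot p p = 1].

Definition tangent (p v : vec) : Prop := edot v p = 0.

Definition bil (M : 'M[R]_3) (u w : vec) : R := (u *m M *m w^T) ord0 ord0.

(* Gram matrix, in Cartesian coordinates, of the warped metric
   ds^2 = dr^2 / f(r)^2 + r^2 dS_2^2 = (Euclidean) + (1/f^2 - 1) dr^2,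
   valid at x <> 0 (where polar coordinates are defined). *)
Definition warped_gram (f : R -> R) (x : vec) : 'M[R]_3 :=
  1%:M + ((f (eradius x) ^+ 2)^-1 - 1) / (eradius x ^+ 2) *: (x^T *m x).

(* the conformal Killing field X = r f(r) d/dr, in Cartesian components
   X(x) = f(|x|) x  (which is 0 at the origin). *)
Definition Xfield (f : R -> R) (x : vec) : vec := f (eradius x) *: x.

Fixpoint Ck {U W : normedModType R} (n : nat) (A : set U) (F : U -> W) : Prop :=
  match n with
  | 0 => forall x, A x -> {for x, continuous F}
  | n'.+1 => (forall x, A x -> differentiable F x) /\
             forall v : U, Ck n' A (fun y => derive F y v)
  end.

Definition smooth_on {U W : normedModType R} (A : set U) (F : U -> W) : Prop :=
  forall n, Ck n A F.

(* 0-homogeneous extension to R^3 \ {0} of a map defined on S^2 *)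
Definition hext {W : Type} (F : vec -> W) (x : vec) : W := F ((eradius x)^-1 *: x).

(* Second fundamental form of the immersed surface r : S^2 -> (R^3, G)
   at p in direction (v, w) (tangent vectors at p), with respect to the
   normal nu, written with the Christoffel symbols of the first kind:
   h(v,w) = G(D_v D_w r + Gamma(dr v, dr w), nu)
   G(Gamma(a,b),c) = 1/2 (D_a G(b,c) + D_b G(a,c) - D_c G(a,b)). *)
Definition sff (G : vec -> 'M[R]_3) (r nu : vec -> vec) (p v w : vec) : R :=
  let Rx := hext r in
  let a := derive Rx p v in
  let b := derive Rx p w in
  let n := nu p in
  let y := r p in
  bil (G y) (derive (fun x => derive Rx x w) p v) n
  + (bil (derive G y a) b n + bil (derive G y b) a n
     - bil (derive G y n) a b) / 2.

Definition support_fn (G : vec -> 'M[R]_3) (f : R -> R) (r nu : vec -> vec)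
    (p : vec) : R :=
  bil (G (r p)) (Xfield f (r p)) (nu p).

End Defs.
Arguments S2 {R}.

(* At a point p of Z the support function vanishes, so r(p) is Euclidean
   orthogonal to nu(p) and the conformal field X = f(|r|) r is tangent to the
   surface: X = dr(w) for a tangent vector w at p.  Differentiating
   G(dr(w), nu) = 0 along w gives the Weingarten identity
   h(w,w) = - G(dr w, dnu w) - (D_nu G)(dr w, dr w) / 2, and the last term
   vanishes because the warped metric is invariant under the reflection in the
   plane nu(p)^perp, which fixes r(p) and X.  On the other hand phi = G(X, nu)
   and G(X, .) = (r . .) / f, so dphi(w) = G(X, dnu w) = - h(w,w) < 0. *)

From HB Require Import structures.
From mathcomp Require Import all_boot all_order all_algebra.
From mathcomp Require Import all_classical all_reals all_analysis.
From mathcomp Require Import ring lra.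
Import Order.TTheory GRing.Theory Num.Theory.
Import numFieldNormedType.Exports.
Local Open Scope classical_set_scope.
Local Open Scope ring_scope.
Set Implicit Arguments.
Unset Strict Implicit.
Unset Printing Implicit Defensive.

Section EuclideanDot.
Variable R : realType.
Notation vec := 'rV[R]_3.
Implicit Types (u v w x : vec) (M N : 'M[R]_3).

Lemma edotE u w : edot u w = (u *m w^T) ord0 ord0.
Proof. by rewrite !mxE; apply: eq_bigr => i _; rewrite mxE. Qed.

Lemma edotC u w : edot u w = edot w u.
Proof. by apply: eq_bigr => i _; rewrite mulrC. Qed.

Lemma edotDl u v w : edot (u + v) w = edot u w + edot v w.
Proof. by rewrite !edotE mulmxDl mxE. Qed.

Lemma edotZl (a : R) u w : edot (a *: u) w = a * edot u w.
Proof. by rewrite !edotE -scalemxAl mxE. Qed.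

Lemma edotNl u w : edot (- u) w = - edot u w.
Proof. by rewrite -scaleN1r edotZl mulN1r. Qed.

Lemma edotBl u v w : edot (u - v) w = edot u w - edot v w.
Proof. by rewrite edotDl edotNl. Qed.

Lemma edotDr u v w : edot w (u + v) = edot w u + edot w v.
Proof. by rewrite edotC edotDl !(edotC w). Qed.

Lemma edotZr (a : R) u w : edot w (a *: u) = a * edot w u.
Proof. by rewrite edotC edotZl edotC. Qed.

Lemma edot0l w : edot 0 w = 0.
Proof. by rewrite -(scale0r 0) edotZl mul0r. Qed.

Lemma edot_ge0 u : 0 <= edot u u.
Proof. by apply: sumr_ge0 => i _; rewrite -expr2 sqr_ge0. Qed.

Lemma edot_eq0 u : (edot u u == 0) = (u == 0).
Proof.
apply/eqP/eqP => [uu0|->]; last exact: edot0l.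
apply/rowP => i; rewrite mxE; apply/eqP; rewrite -sqrf_eq0 expr2; apply/eqP.
by apply: (psumr_eq0P _ uu0) => // j _; rewrite -expr2 sqr_ge0.
Qed.

Lemma eradius_sqr x : eradius x ^+ 2 = edot x x.
Proof. by rewrite sqr_sqrtr // edot_ge0. Qed.

Lemma eradius_gt0 x : x != 0 -> 0 < eradius x.
Proof. by move=> x0; rewrite sqrtr_gt0 lt_def edot_ge0 edot_eq0 x0. Qed.

Lemma eradiusZ (a : R) x : 0 <= a -> eradius (a *: x) = a * eradius x.
Proof.
by move=> a0; rewrite /eradius edotZl edotZr mulrA -expr2 sqrtrM ?sqr_ge0 // sqrtr_sqr ger0_norm.
Qed.

Lemma S2_neq0 x : S2 x -> x != 0.
Proof. by rewrite -edot_eq0 /S2 => ->; rewrite oner_eq0. Qed.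

Lemma bilE M u w : bil M u w = \sum_(i < 3) \sum_(j < 3) u ord0 i * M i j * w ord0 j.
Proof.
rewrite /bil mxE exchange_big; apply: eq_bigr => j _.
by rewrite mxE big_distrl; apply: eq_bigr => i _ /=; rewrite !mxE.
Qed.

Lemma bil1 u w : bil 1%:M u w = edot u w.
Proof. by rewrite /bil mulmx1 edotE. Qed.

Lemma bilDm M N u w : bil (M + N) u w = bil M u w + bil N u w.
Proof. by rewrite /bil mulmxDr mulmxDl mxE. Qed.

Lemma bilZm a M u w : bil (a *: M) u w = a * bil M u w.
Proof. by rewrite /bil -scalemxAr -scalemxAl mxE. Qed.

Lemma bilZl a M u w : bil M (a *: u) w = a * bil M u w.
Proof. by rewrite /bil -!scalemxAl mxE. Qed.

Lemma bil0l M w : bil M 0 w = 0.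
Proof. by rewrite -(scale0r 0) bilZl mul0r. Qed.

Lemma bil0r M w : bil M w 0 = 0.
Proof. by rewrite /bil trmx0 mulmx0 mxE. Qed.

End EuclideanDot.

Section WarpedGram.
Variables (R : realType) (f : R -> R).
Notation vec := 'rV[R]_3.
Implicit Types (u w x y n : vec).

Lemma warped_gramE x u w : bil (warped_gram f x) u w =
  edot u w + ((f (eradius x) ^+ 2)^-1 - 1) / eradius x ^+ 2 * (edot u x * edot x w).
Proof.
rewrite /warped_gram bilDm bilZm bil1 /bil !mulmxA -mulmxA mxE big_ord1 -!edotE.
by rewrite edotC.
Qed.

Lemma warped_gram_orthr x u n : edot x n = 0 -> bil (warped_gram f x) u n = edot u n.
Proof. by move=> xn; rewrite warped_gramE xn !mulr0 addr0. Qed.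

Lemma warped_gram_Xfield x u : x != 0 -> f (eradius x) != 0 ->
  bil (warped_gram f x) (Xfield f x) u = edot x u / f (eradius x).
Proof.
move=> x0 fx0; rewrite warped_gramE /Xfield !edotZl -eradius_sqr.
by field; rewrite fx0 gt_eqF ?eradius_gt0.
Qed.

Lemma warped_gram_reflect y n u (h : R) : edot y n = 0 -> edot u n = 0 ->
  bil (warped_gram f ((- h) *: n + y)) u u = bil (warped_gram f (h *: n + y)) u u.
Proof.
move=> yn un.
have on_line k : edot u (k *: n + y) = edot u y.
  by rewrite edotDr edotZr un mulr0 add0r.
have radius_eq : eradius ((- h) *: n + y) = eradius (h *: n + y).
  rewrite /eradius !(edotDl, edotDr, edotZl, edotZr) yn (edotC n y) yn.
  by congr Num.sqrt; ring.
by rewrite !warped_gramE radius_eq !on_line ![edot (_ + y) u]edotC !on_line.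
Qed.

End WarpedGram.

Section Coordinates.
Variables (R : numFieldType) (V : normedModType R).

Lemma derive_coord m n (F : V -> 'M[R]_(m, n)) i j x v : differentiable F x ->
  'D_v (fun z => F z i j) x = 'D_v F x i j.
Proof.
move=> dF; have dc := differentiable_coord (F x) i j.
rewrite -[fun z => _]/((fun N : 'M[R]_(m, n) => N i j) \o F).
rewrite deriveE; last exact: differentiable_comp.
rewrite diff_comp //= -!deriveE //.
apply: lim_near_cst => //; near=> h.
rewrite /= !mxE addrK [_ *: _]mulrA mulVf ?mul1r //.
by near: h; exact: nbhs_dnbhs_neq.
Unshelve. all: by end_near.
Qed.

Lemma differentiable_coordW m n (F : V -> 'M[R]_(m, n)) i j x :
  differentiable F x -> differentiable (fun z => F z i j) x.
Proof. by move=> dF; exact: (differentiable_comp dF (differentiable_coord (F x) i j)). Qed.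

End Coordinates.

Section DirectionalDerivative.
Variables (R : realType) (V : normedModType R).
Notation vec := 'rV[R]_3.

Lemma near_line (P : V -> Prop) x v : (\forall z \near x, P z) ->
  \forall h \near (0 : R)^', P (h *: v + x).
Proof.
have line_cvg : (fun h : R => h *: v + x) @ 0^' --> x.
  apply: cvg_within_filter.
  suff : (fun h : R => h *: v + x) @ 0 --> (0 : R) *: v + x by rewrite scale0r add0r.
  by apply: cvgD; [apply: cvgZr_tmp; exact: cvg_id | exact: cvg_cst].
exact: line_cvg.
Qed.

Lemma derive_comp (U W : normedModType R) (F : V -> U) (g : U -> W) x v :
  differentiable F x -> differentiable g (F x) ->
  'D_v (g \o F) x = 'D_('D_v F x) g (F x).
Proof.
move=> dF dg; rewrite !deriveE //; last exact: differentiable_comp.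
by rewrite diff_comp.
Qed.

Let bil_sum (M : V -> 'M[R]_3) (s t : V -> vec) :
  (fun z => bil (M z) (s z) (t z)) = \sum_(i < 3) \sum_(j < 3)
    ((fun z => s z ord0 i) * (fun z => M z i j) * (fun z => t z ord0 j)).
Proof.
apply/funext => z; rewrite bilE fct_sumE; apply: eq_bigr => i _.
by rewrite fct_sumE.
Qed.

Lemma differentiable_bil (M : V -> 'M[R]_3) (s t : V -> vec) x :
  differentiable M x -> differentiable s x -> differentiable t x ->
  differentiable (fun z => bil (M z) (s z) (t z)) x.
Proof.
move=> dM ds dt; rewrite bil_sum.
apply: differentiable_sum => i; apply: differentiable_sum => j.
by apply: differentiableM; [apply: differentiableM|]; exact: differentiable_coordW.
Qed.

Lemma derive_bil (M : V -> 'M[R]_3) (s t : V -> vec) x v :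
  differentiable M x -> differentiable s x -> differentiable t x ->
  'D_v (fun z => bil (M z) (s z) (t z)) x =
  bil ('D_v M x) (s x) (t x) + bil (M x) ('D_v s x) (t x) + bil (M x) (s x) ('D_v t x).
Proof.
move=> dM ds dt.
have dc m n (F : V -> 'M[R]_(m, n)) i j : differentiable F x ->
    derivable (fun z => F z i j) x v.
  by move=> dF; apply/diff_derivable/differentiable_coordW.
rewrite bil_sum derive_sum => [|i]; last first.
  by apply: derivable_sum => j; apply: derivableM; [apply: derivableM|]; exact: dc.
rewrite !bilE -!big_split; apply: eq_bigr => i _ /=.
rewrite derive_sum => [|j]; last by apply: derivableM; [apply: derivableM|]; exact: dc.
rewrite -!big_split; apply: eq_bigr => j _ /=.
have dsi := dc _ _ _ ord0 i ds; have dMij := dc _ _ _ i j dM.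
have dtj := dc _ _ _ ord0 j dt.
rewrite deriveM; [rewrite deriveM // | exact: derivableM | done].
rewrite -[('D_v s x) ord0 i](derive_coord ord0 i v ds).
rewrite -[('D_v t x) ord0 j](derive_coord ord0 j v dt).
rewrite -[('D_v M x) i j](derive_coord i j v dM).
rewrite /GRing.scale /= [in X in X * _]fctE; ring.
Qed.

Lemma differentiable_edot (s t : V -> vec) x :
  differentiable s x -> differentiable t x -> differentiable (fun z => edot (s z) (t z)) x.
Proof.
move=> ds dt; under eq_fun do rewrite -bil1.
exact: (differentiable_bil (differentiable_cst _ _)).
Qed.

Lemma derive_edot (s t : V -> vec) x v :
  differentiable s x -> differentiable t x ->
  'D_v (fun z => edot (s z) (t z)) x = edot ('D_v s x) (t x) + edot (s x) ('D_v t x).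
Proof.
move=> ds dt; under eq_fun do rewrite -bil1.
rewrite (derive_bil _ (differentiable_cst _ _)) // derive_cst !bil1.
by rewrite -[(0 : 'M[R]_3)](scale0r 0) bilZm mul0r add0r.
Qed.

Lemma derive_even_eq0 (g : V -> R) x v : differentiable g x ->
  (\forall h \near 0^', g (h *: v + x) = g ((- h) *: v + x)) -> 'D_v g x = 0.
Proof.
move=> dg g_even.
have D_opp : 'D_(- v) g x = - 'D_v g x by rewrite !deriveE // linearN.
have D_sym : 'D_(- v) g x = 'D_v g x.
  have quot_eq : {near 0^', (fun h : R => h^-1 *: (g (h *: - v + x) - g x)) =1
      (fun h => h^-1 *: (g (h *: v + x) - g x))}.
    by apply: filterS g_even => h /= ->; rewrite scalerN scaleNr.
  rewrite /derive; congr lim; rewrite eqEsubset; split; apply: near_eq_cvg => //.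
  by apply: filterS quot_eq => h /= ->.
by move: D_sym; rewrite D_opp; lra.
Qed.

End DirectionalDerivative.

Lemma differentiable_eradius (R : realType) (y : 'rV[R]_3) : y != 0 ->
  differentiable (@eradius R) y.
Proof.
move=> y0; apply: (@differentiable_comp _ _ _ _ (fun z => edot z z) Num.sqrt).
  exact: differentiable_edot.
have yy_gt0 : 0 < edot y y by rewrite lt_def edot_eq0 y0 edot_ge0.
by apply/derivable1_diffP; exact: (@ex_derive _ _ _ _ _ _ _ (is_derive1_sqrt yy_gt0)).
Qed.

Section HomogeneousExtension.
Variable R : realType.
Notation vec := 'rV[R]_3.
Implicit Types (x z u w : vec).

Definition normalize x : vec := (eradius x)^-1 *: x.

Lemma normalize_S2 x : x != 0 -> S2 (normalize x).
Proof.
move=> x0; rewrite /S2 /= /normalize edotZl edotZr -eradius_sqr mulrA -expr2 -exprMn.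
by rewrite mulVf ?expr1n // gt_eqF ?eradius_gt0.
Qed.

Lemma normalizeK x : x != 0 -> eradius x *: normalize x = x.
Proof. by move=> x0; rewrite scalerA mulfV ?scale1r // gt_eqF ?eradius_gt0. Qed.

Lemma hextE (T : Type) (F : vec -> T) x : hext F x = F (normalize x).
Proof. by []. Qed.

Lemma hext_S2 (T : Type) (F : vec -> T) z : S2 z -> hext F z = F z.
Proof. by move=> z1; rewrite /hext /eradius z1 sqrtr1 invr1 scale1r. Qed.

Lemma hextZ (T : Type) (F : vec -> T) (l : R) z : 0 < l -> hext F (l *: z) = hext F z.
Proof.
move=> l0; rewrite /hext eradiusZ ?ltW // invfM scalerA mulrAC mulVf ?mul1r //.
by rewrite gt_eqF.
Qed.

Lemma derive_hextZ (W : normedModType R) (F : vec -> W) (l : R) z u : 0 < l ->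
  'D_u (hext F) (l *: z) = 'D_(l^-1 *: u) (hext F) z.
Proof.
move=> l0.
have shiftZ (h : R) : hext F (h *: u + l *: z) = hext F (h *: (l^-1 *: u) + z).
  by rewrite -[RHS](hextZ _ _ l0) scalerDr !scalerA mulrAC mulfV ?mul1r ?gt_eqF.
by rewrite /derive /= hextZ //; under eq_fun do rewrite shiftZ.
Qed.

Lemma derive_hext_radial (W : normedModType R) (F : vec -> W) z : 'D_z (hext F) z = 0.
Proof.
have near0_pos : \forall h \near (0 : R)^', 0 < h + 1.
  apply: nbhs_dnbhs; apply: filterS (@Nlt_nbhsl _ 0 1 _) => [h|]; lra.
apply: lim_near_cst => //; apply: filterS near0_pos => h h1 /=.
by rewrite -[X in h *: z + X]scale1r -scalerDl hextZ // subrr scaler0.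
Qed.

Lemma derive_hext_tangent (W : normedModType R) (F : vec -> W) x w : x != 0 ->
  differentiable (hext F) (normalize x) ->
  exists2 v, tangent (normalize x) v & 'D_w (hext F) x = 'D_v (hext F) (normalize x).
Proof.
move=> x0 dF; have z1 := normalize_S2 x0.
set z := normalize x in dF z1 *; set l := eradius x.
have l0 : 0 < l by exact: eradius_gt0.
set u := l^-1 *: w; pose v := u - edot u z *: z.
exists v; first by rewrite /tangent edotBl edotZl z1 mulr1 subrr.
have xE : x = l *: z by rewrite normalizeK.
rewrite {1}xE derive_hextZ // -/u -[u](subrK (edot u z *: z)) -/v.
by rewrite deriveE // linearD linearZ /= -!deriveE // derive_hext_radial scaler0 addr0.
Qed.

End HomogeneousExtension.

Section LinearTangentOnto.
Variable R : realType.
Notation vec := 'rV[R]_3.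

Lemma linear_tangent_onto (A : {linear vec -> vec}) (p n b : vec) : S2 p -> S2 n ->
  (forall v, tangent p v -> edot (A v) n = 0) ->
  (forall v, tangent p v -> v != 0 -> A v != 0) ->
  edot b n = 0 -> exists2 w, tangent p w & A w = b.
Proof.
move=> p1 n1 An A_inj bn.
have outer (u q : vec) (m : 'rV[R]_3) : (u *m q^T) *m m = edot u q *: m.
  by rewrite [u *m q^T]mx11_scalar mul_scalar_mx edotE.
(* [M] extends [A] from the plane orthogonal to [p] by sending [p] to [n]. *)
pose M : 'M[R]_3 := (1%:M - p^T *m p) *m lin1_mx A + p^T *m n.
have ME v : v *m M = A (v - edot v p *: p) + edot v p *: n.
  by rewrite /M mulmxDr !mulmxA mulmxBr mulmx1 mulmxA !outer mul_rV_lin1.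
have tangent_part v : tangent p (v - edot v p *: p).
  by rewrite /tangent edotBl edotZl p1 mulr1 subrr.
have M_normal v : edot (v *m M) n = edot v p.
  by rewrite ME edotDl An // edotZl n1 mulr1 add0r.
have M_unit : M \in unitmx.
  rewrite unitmxE unitfE; apply/negP => /det0P [v /negP v0 Mv]; apply: v0.
  have vp : edot v p = 0 by rewrite -M_normal Mv edot0l.
  move: Mv; rewrite ME vp !scale0r subr0 addr0 => Av.
  by apply/negPn/negP => /(A_inj v vp); rewrite Av eqxx.
have bM_tangent : tangent p (b *m invmx M) by rewrite /tangent -M_normal mulmxKV.
exists (b *m invmx M) => //.
by move: (ME (b *m invmx M)); rewrite mulmxKV // bM_tangent !scale0r subr0 addr0.
Qed.

End LinearTangentOnto.

Section Smoothness.
Variable R : realType.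

Lemma smooth_differentiable (U W : normedModType R) (A : set U) (F : U -> W) x :
  smooth_on A F -> A x -> differentiable F x.
Proof. by move=> sF; exact: (sF 1%N).1. Qed.

Lemma smooth_differentiable_derive (U W : normedModType R) (A : set U) (F : U -> W) v x :
  smooth_on A F -> A x -> differentiable (fun y => 'D_v F y) x.
Proof. by move=> sF; exact: ((sF 2%N).2 v).1. Qed.

End Smoothness.

Section Surface.
Variable R : realType.
Notation vec := 'rV[R]_3.
Variables (G : vec -> 'M[R]_3) (r nu : vec -> vec).
Hypothesis r_smooth : smooth_on [set x | x != 0] (hext r).
Hypothesis nu_smooth : smooth_on [set x | x != 0] (hext nu).
Hypothesis nu_normal : forall p v, S2 p -> tangent p v ->
  bil (G (r p)) ('D_v (hext r) p) (nu p) = 0.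

Lemma hext_nu_normal x w : x != 0 ->
  bil (G (hext r x)) ('D_w (hext r) x) (hext nu x) = 0.
Proof.
move=> x0; have z1 := normalize_S2 x0.
have [v tv ->] := derive_hext_tangent w x0 (smooth_differentiable r_smooth (S2_neq0 z1)).
by rewrite !hextE; exact: nu_normal.
Qed.

Lemma sff_weingarten p w : S2 p -> differentiable G (r p) ->
  sff G r nu p w w = - bil (G (r p)) ('D_w (hext r) p) ('D_w (hext nu) p)
    - bil ('D_(nu p) G (r p)) ('D_w (hext r) p) ('D_w (hext r) p) / 2.
Proof.
move=> p1 dG; have p0 := S2_neq0 p1.
have dr := smooth_differentiable r_smooth p0.
have dDr := smooth_differentiable_derive w r_smooth p0.
have dnu := smooth_differentiable nu_smooth p0.
have [rp nup] := (hext_S2 r p1, hext_S2 nu p1).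
have dG' : differentiable G (hext r p) by rewrite rp.
have dGr : differentiable (G \o hext r) p by exact: differentiable_comp.
have D_normal : 'D_w (fun x => bil (G (hext r x)) ('D_w (hext r) x) (hext nu x)) p = 0.
  rewrite -(derive_cst (0 : R) p w); apply: near_eq_derive; near=> x.
  by apply: hext_nu_normal; near: x; exact: (cvgr_neq0 _ cvg_id p0).
move: D_normal; rewrite (derive_bil _ dGr dDr dnu) derive_comp //= rp.
rewrite [hext nu p]nup /sff /=; lra.
Unshelve. all: by end_near.
Qed.

End Surface.

Section WarpedProduct.
Variable R : realType.
Notation vec := 'rV[R]_3.
Variables (Omega : set vec) (f : R -> R) (G : vec -> 'M[R]_3).
Hypothesis Omega_open : open Omega.
Hypothesis G_warped : forall x, Omega x -> x != 0 -> G x = warped_gram f x.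

Lemma warped_derive_normal_eq0 y n a : Omega y -> y != 0 -> differentiable G y ->
  edot y n = 0 -> edot a n = 0 -> bil ('D_n G y) a a = 0.
Proof.
move=> Oy y0 dG yn an; have dc := differentiable_cst a y.
have := derive_bil n dG dc dc; rewrite derive_cst bil0l bil0r !addr0 => <-.
apply: derive_even_eq0; first exact: differentiable_bil.
have near_y : \forall z \near y, Omega z /\ z != 0.
  by near=> z; split; near: z; [exact: open_nbhs_nbhs | exact: (cvgr_neq0 _ cvg_id y0)].
have [near_plus near_minus] := (near_line n near_y, near_line (- n) near_y).
near=> h.
have [Op np] : Omega (h *: n + y) /\ h *: n + y != 0 by near: h; exact: near_plus.
have [Om nm] : Omega ((- h) *: n + y) /\ (- h) *: n + y != 0.
  by rewrite scaleNr -scalerN; near: h; exact: near_minus.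
rewrite /cst (G_warped Op np) (G_warped Om nm).
exact/esym/warped_gram_reflect.
Unshelve. all: by end_near.
Qed.

Variables (r nu : vec -> vec).
Hypothesis f_gt0 : forall x, Omega x -> x != 0 -> 0 < f (eradius x).
Hypothesis r_Omega : forall p, S2 p -> Omega (r p).
Hypothesis r_smooth : smooth_on [set x | x != 0] (hext r).
Hypothesis nu_smooth : smooth_on [set x | x != 0] (hext nu).
Hypothesis nu_normal : forall p v, S2 p -> tangent p v ->
  bil (G (r p)) ('D_v (hext r) p) (nu p) = 0.

Lemma support_fn_warped p : S2 p -> r p != 0 ->
  support_fn G f r nu p = edot (r p) (nu p) / f (eradius (r p)).
Proof.
move=> p1 rp0; have Orp := r_Omega p1.
by rewrite /support_fn G_warped // warped_gram_Xfield // gt_eqF ?f_gt0.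
Qed.

Lemma Xfield_tangent_lift p : S2 p -> r p != 0 -> edot (r p) (nu p) = 0 ->
  bil (G (r p)) (nu p) (nu p) = 1 ->
  (forall v, tangent p v -> v != 0 -> 'D_v (hext r) p != 0) ->
  exists2 w, tangent p w & 'D_w (hext r) p = Xfield f (r p).
Proof.
move=> p1 rp0 rnu nu1 r_imm.
have Grp := G_warped (r_Omega p1) rp0.
have dr := smooth_differentiable r_smooth (S2_neq0 p1).
have nu_S2 : S2 (nu p) by move: nu1; rewrite Grp warped_gram_orthr.
have [w tw dw] : exists2 w, tangent p w & 'd (hext r) p w = Xfield f (r p).
  apply: (linear_tangent_onto p1 nu_S2) => [v tv|v tv v0|].
  - by rewrite -deriveE // -(warped_gram_orthr f _ rnu) -Grp nu_normal.
  - by rewrite -deriveE //; exact: r_imm.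
  - by rewrite edotZl rnu mulr0.
by exists w; rewrite // deriveE.
Qed.

Lemma derive_support_fn p w : S2 p -> tangent p w -> r p != 0 ->
  edot (r p) (nu p) = 0 -> differentiable f (eradius (r p)) ->
  'D_w (hext (support_fn G f r nu)) p = bil (G (r p)) (Xfield f (r p)) ('D_w (hext nu) p).
Proof.
move=> p1 tw rp0 rnu df; have p0 := S2_neq0 p1.
have dr := smooth_differentiable r_smooth p0.
have dnu := smooth_differentiable nu_smooth p0.
have [rp nup] := (hext_S2 r p1, hext_S2 nu p1).
have Orp := r_Omega p1; have Grp := G_warped Orp rp0.
pose num x := edot (hext r x) (hext nu x).
pose den x := (f (eradius (hext r x)))^-1.
have phiE : \forall x \near p, hext (support_fn G f r nu) x = (num * den) x.
  near=> x; have x0 : x != 0 by near: x; exact: (cvgr_neq0 _ cvg_id p0).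
  have rx0 : hext r x != 0.
    by near: x; apply: (cvgr_neq0 _ (differentiable_continuous dr)); rewrite rp.
  by rewrite hextE support_fn_warped //; exact: normalize_S2.
have dnum : differentiable num p by exact: differentiable_edot.
have dden : differentiable den p.
  have dfr : differentiable (f \o @eradius R \o hext r) p.
    apply: (differentiable_comp dr); rewrite rp.
    exact: (differentiable_comp (differentiable_eradius rp0) df).
  by apply: (differentiableV dfr); rewrite /comp rp gt_eqF ?f_gt0.
have Dr_nu : edot ('D_w (hext r) p) (nu p) = 0.
  by rewrite -(warped_gram_orthr f _ rnu) -Grp nu_normal.
rewrite (near_eq_derive _ phiE) deriveM; [|exact: diff_derivable..].
rewrite /num /den /= derive_edot // rp [hext nu p]nup rnu Dr_nu scale0r !add0r.
by rewrite Grp warped_gram_Xfield ?gt_eqF ?f_gt0 // mulrC.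
Unshelve. all: by end_near.
Qed.

End WarpedProduct.

Theorem proposition9 (R : realType)
  (* the warped product space M: an open region Omega of R^3 *)
  (Omega : set 'rV[R]_3) (f : R -> R) (G : 'rV[R]_3 -> 'M[R]_3)
  (r nu : 'rV[R]_3 -> 'rV[R]_3) :
  open Omega ->
  (* f smooth and positive on the radii occurring in M *)
  smooth_on [set t | exists2 x, Omega x & x != 0 /\ t = eradius x] f ->
  (forall x, Omega x -> x != 0 -> 0 < f (eradius x)) ->
  (* the Riemannian metric G of M: smooth on Omega, given by the warped
     form wherever polar coordinates are defined *)
  smooth_on Omega G ->
  (forall x, Omega x -> x != 0 -> G x = warped_gram f x) ->
  (* r : S^2 -> M is a smooth embedding *)
  (forall p, S2 p -> Omega (r p)) ->
  smooth_on [set x | x != 0] (hext r) ->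
  {in S2 &, injective r} ->
  (forall p v, S2 p -> tangent p v -> v != 0 -> derive (hext r) p v != 0) ->
  (* nu is a smooth unit normal field *)
  smooth_on [set x | x != 0] (hext nu) ->
  (forall p, S2 p -> bil (G (r p)) (nu p) (nu p) = 1) ->
  (forall p v, S2 p -> tangent p v ->
     bil (G (r p)) (derive (hext r) p v) (nu p) = 0) ->
  (* strict convexity: positive definite second fundamental form *)
  (forall p v, S2 p -> tangent p v -> v != 0 -> 0 < sff G r nu p v v) ->
  (* conclusion: d(phi) <> 0 on Z = {p in S^2 \ m_0 | phi p = 0} *)
  forall p, S2 p -> r p != 0 -> support_fn G f r nu p = 0 ->
    exists2 v, tangent p v & derive (hext (support_fn G f r nu)) p v != 0.
Proof.
move=> Omega_open f_smooth f_gt0 G_smooth G_warped r_Omega r_smooth _ r_imm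
  nu_smooth nu_unit nu_normal sff_gt0 p p1 rp0 phi0.
have Orp := r_Omega p p1.
have f_rp : 0 < f (eradius (r p)) := f_gt0 _ Orp rp0.
have rnu : edot (r p) (nu p) = 0.
  move/eqP: phi0; rewrite (support_fn_warped G_warped) // mulf_eq0 invr_eq0.
  by rewrite (gt_eqF f_rp) orbF => /eqP.
have [w tw Dw] := Xfield_tangent_lift G_warped r_Omega r_smooth nu_normal p1 rp0 rnu
  (nu_unit p p1) (fun v => r_imm p v p1).
have w0 : w != 0.
  apply/eqP => w0; move: Dw; rewrite w0 derive0 => /esym/eqP.
  by rewrite scaler_eq0 (gt_eqF f_rp) (negbTE rp0).
have dG := smooth_differentiable G_smooth Orp.
have df : differentiable f (eradius (r p)).
  by apply: (smooth_differentiable f_smooth); exists (r p).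
exists w => //.
rewrite (derive_support_fn G_warped f_gt0 r_Omega r_smooth nu_smooth nu_normal) //.
have := sff_gt0 p w p1 tw w0.
rewrite (sff_weingarten r_smooth nu_smooth nu_normal) // Dw.
rewrite (warped_derive_normal_eq0 Omega_open G_warped) ?edotZl ?rnu ?mulr0 // mul0r subr0.
by rewrite -oppr_eq0 => /gt_eqF ->.
Qed.
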